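(* Let $r \geq 3$ be an integer and $l$ be any integer with $2l+1 \geq r$. If $q \geq 2lr^3$ is a power of an odd prime and $n = rq^2$, then \[ \mathrm{ex}_r\bigl(n, \{C_2, K_{2,t+1}\}\bigr) \geq \frac{l}{r^{3/2}}\, n^{3/2} - \frac{l}{r}\, n, \] where $t = (r-1)(2l^2 - l)$.
   Context: Let $G$ be a multigraph and $\mathcal{F}$ a hypergraph. $\mathcal{F}$ is a Berge-$G$ if there is a bijection $f: E(G) \to E(\mathcal{F})$ with $e \subseteq f(e)$ for every $e \in E(G)$. For a family $\mathcal{G}$ of multigraphs, a hypergraph $\mathcal{H}$ is $\mathcal{G}$-free if for every $G \in \mathcal{G}$, $\mathcal{H}$ contains no subhypergraph isomorphic to a Berge-$G$. $\mathrm{ex}_r(n,\mathcal{G})$ denotes the maximum number of edges in an $n$-vertex $r$-uniform $\mathcal{G}$-free hypergraph. $C_2$ is the multigraph consisting of two vertices joined by two parallel edges (so $C_2$-free means linear), and $K_{2,t+1}$ is the complete bipartite graph with parts of sizes $2$ and $t+1$. *)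

From mathcomp Require Import all_boot.
From Stdlib Require Import Reals.
Set Implicit Arguments. Unset Strict Implicit. Unset Printing Implicit Defensive.

(* A finite multigraph: vertex type, edge type, and the two endpoints of each
   edge (parallel edges = distinct edges with the same endpoints). *)
Record multigraph := Multigraph {
  mg_V : finType;
  mg_E : finType;
  mg_ends : mg_E -> mg_V * mg_V }.

Definition hypergraph (n : nat) := {set {set 'I_n}}.

Definition uniformb (r n : nat) (H : hypergraph n) : bool :=
  [forall e in H, #|e| == r].

Definition berge_containsb (n : nat) (H : hypergraph n) (G : multigraph) : bool :=
  [exists phi : {ffun mg_V G -> 'I_n}, exists f : {ffun mg_E G -> {set 'I_n}},
    [&& injectiveb phi, injectiveb f &
        [forall e : mg_E G,
           [&& f e \in H, phi (mg_ends e).1 \in f e & phi (mg_ends e).2 \in f e]]]].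

Definition freeb (n : nat) (fam : seq multigraph) (H : hypergraph n) : bool :=
  all (fun G => ~~ berge_containsb H G) fam.

Definition ex_r (r n : nat) (fam : seq multigraph) : nat :=
  \max_(H : hypergraph n | uniformb r H && freeb fam H) #|H|.

Definition C2 : multigraph :=
  @Multigraph 'I_2 'I_2 (fun _ => (ord0, ord_max)).

Definition K2 (m : nat) : multigraph :=
  @Multigraph ('I_2 + 'I_m)%type ('I_2 * 'I_m)%type
    (fun e => (inl e.1, inr e.2)).

Definition odd_prime_power (q : nat) : Prop :=
  exists p k : nat, prime p /\ odd p /\ (0 < k)%N /\ q = (p ^ k)%N.

(* Take a field F of odd order q, an injection c : 'I_r -> F and a set Lam of l
   nonzero slopes such that (c k - c i) x = (c k - c j) y with x, y in Lam and k
   outside {i, j} forces i = j and x = y; as q >= 2 l r^3, Lam can be chosen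
   greedily, avoiding the ratios (c k - c j) / (c k - c i).  On r copies of F^2,
   each (a, b, lam, s) with lam in Lam and s <> 0 spans the edge made of the
   points (a + c_i lam s, b + c_i lam s^2), one in each copy i; there are
   l q^2 (q - 1) = l n^(3/2) / r^(3/2) - l n / r such edges.  Two points in
   different copies determine the parameters, so the hypergraph is linear.  A
   common neighbour of two vertices is reached in a copy k through slopes x and y
   and is given by a root of a quadratic whose leading coefficient vanishes only
   when both vertices lie in the same copy and x = y; counting these roots bounds
   every codegree by t = (r - 1)(2 l^2 - l), which excludes a Berge-K_{2,t+1}. *)

Set Warnings "-notation-overridden -ambiguous-paths".
From mathcomp Require Import all_boot all_algebra finfield.
From mathcomp Require Import ring zify.
Import GRing.Theory.
Set Implicit Arguments. Unset Strict Implicit. Unset Printing Implicit Defensive.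

Section HypergraphFacts.
Variable T : finType.
Implicit Types (H : {set {set T}}) (u v : T).

Definition linear_hypergraph H :=
  forall e1 e2 x y, e1 \in H -> e2 \in H -> x != y ->
    x \in e1 -> y \in e1 -> x \in e2 -> y \in e2 -> e1 = e2.

Definition common_nbhd H u v : {set T} :=
  [set w | [&& w != u, w != v, [exists e in H, (u \in e) && (w \in e)]
         & [exists e in H, (v \in e) && (w \in e)]]].

Definition codegree_le H t := forall u v, u != v -> #|common_nbhd H u v| <= t.

End HypergraphFacts.

Lemma linear_C2_free n (H : hypergraph n) : linear_hypergraph H -> ~~ berge_containsb H C2.
Proof.
move=> lin; apply/existsP => -[phi /existsP [f /and3P [/injectiveP phi_inj /injectiveP f_inj /forallP f_ok]]].
have /and3P [f0H u0 v0] := f_ok ord0; have /and3P [f1H u1 v1] := f_ok ord_max.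
have uv : phi ord0 != phi ord_max by rewrite (inj_eq phi_inj).
by have /f_inj := lin _ _ _ _ f0H f1H uv u0 v0 u1 v1.
Qed.

Lemma codegree_K2_free n (H : hypergraph n) t :
  codegree_le H t -> ~~ berge_containsb H (K2 t.+1).
Proof.
move=> codeg; apply/existsP => -[phi /existsP [f /and3P [/injectiveP phi_inj _ /forallP f_ok]]].
set u := phi (inl ord0); set v := phi (inl ord_max).
have uv : u != v by rewrite (inj_eq phi_inj).
have leaves_sub : [set phi (inr b) | b : 'I_t.+1] \subset common_nbhd H u v.
  apply/subsetP => _ /imsetP [b _ ->]; rewrite inE !(inj_eq phi_inj) /=.
  apply/andP; split; apply/existsP; [exists (f (ord0, b)) | exists (f (ord_max, b))].
    by case/and3P: (f_ok (ord0, b)) => -> -> ->.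
  by case/and3P: (f_ok (ord_max, b)) => -> -> ->.
have := leq_trans (subset_leq_card leaves_sub) (codeg u v uv).
by rewrite card_imset ?card_ord ?ltnn // => x y /phi_inj [].
Qed.

Section Relabel.
Variables (aT rT : finType) (g : aT -> rT) (g' : rT -> aT).
Hypotheses (gK : cancel g g') (g'K : cancel g' g).
Variable H : {set {set aT}}.
Let gH := [set g @: e | e : {set aT} in H].

Let mem_relabel (e : {set aT}) x : (x \in g @: e) = (g' x \in e).
Proof. by rewrite (can2_imset_pre _ gK g'K) inE. Qed.

Lemma linear_hypergraph_relabel : linear_hypergraph H -> linear_hypergraph gH.
Proof.
move=> lin _ _ x y /imsetP [e1 e1H ->] /imsetP [e2 e2H ->] xy.
rewrite !mem_relabel => x1 y1 x2 y2.
by rewrite (lin e1 e2 (g' x) (g' y)) // (can_eq g'K).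
Qed.

Lemma codegree_le_relabel t : codegree_le H t -> codegree_le gH t.
Proof.
move=> codeg u v uv.
have sub : common_nbhd gH u v \subset g @: common_nbhd H (g' u) (g' v).
  apply/subsetP => w; rewrite mem_relabel !inE !(can_eq g'K).
  case/and4P => -> -> /existsP [_ /andP [/imsetP [e eH ->]]].
  rewrite !mem_relabel => ue /existsP [_ /andP [/imsetP [f fH ->]]].
  rewrite !mem_relabel => vf /=.
  by apply/andP; split; apply/existsP; [exists e | exists f]; rewrite ?eH ?fH.
apply: leq_trans (subset_leq_card sub) _.
by rewrite card_imset ?codeg ?(can_eq g'K) //; apply: can_inj gK.
Qed.

End Relabel.

Lemma card_le_ex_r (V : finType) (H : {set {set V}}) r t :
  (forall e, e \in H -> #|e| = r) -> linear_hypergraph H -> codegree_le H t ->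
  (#|H| <= ex_r r #|V| [:: C2; K2 t.+1])%N.
Proof.
move=> unif lin codeg; pose gH := [set enum_rank @: e | e : {set V} in H].
have rank_inj := can_inj (@enum_rankK V).
have -> : #|H| = #|gH| by rewrite card_imset //; apply: imset_inj.
apply: (leq_bigmax_cond (F := fun H : hypergraph #|V| => #|H|)).
rewrite /freeb /= andbT; apply/and3P; split.
- by apply/forall_inP => _ /imsetP [e eH ->]; rewrite card_imset ?unif.
- exact/linear_C2_free/(linear_hypergraph_relabel (@enum_rankK V) (@enum_valK V)).
- exact/codegree_K2_free/(codegree_le_relabel (@enum_rankK V) (@enum_valK V)).
Qed.

Lemma leq_card_bigcup (I T : finType) (P : {pred I}) (G : I -> {set T}) :
  (#|\bigcup_(i in P) G i| <= \sum_(i in P) #|G i|)%N.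
Proof.
elim/big_rec2: _ => [|i n S _ le_S_n]; first by rewrite cards0.
exact: leq_trans (leq_card_setU _ _) (leq_add (leqnn _) le_S_n).
Qed.

Lemma double_sum_neqS (T : finType) (L : {set T}) :
  (\sum_(x in L) \sum_(y in L) (x != y).+1 = 2 * #|L| ^ 2 - #|L|)%N.
Proof.
transitivity (\sum_(x in L) (2 * #|L| - 1))%N.
  apply: eq_bigr => x xL; rewrite (big_setD1 x xL) eqxx /=.
  rewrite (eq_bigr (fun=> 2%N)) => [|y]; last by rewrite !inE eq_sym => /andP [/negbTE ->].
  by rewrite sum_nat_const (cardsD1 x L) xL; lia.
rewrite sum_nat_const; nia.
Qed.

Local Open Scope ring_scope.

Lemma card_roots_quadratic (F : finIdomainType) (a b c : F) :
  [|| a != 0, b != 0 | c != 0] ->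
  (#|[set x | (a * x ^+ 2 + b * x + c == 0)%R]| <= ((a != 0)%R).+1)%N.
Proof.
move=> abc; set p := a *: 'X^2 + b *: 'X + c%:P.
have p_neq0 : p != 0.
  apply: contraTneq abc => p0.
  have [<- <- <-] : [/\ p`_2 = a, p`_1 = b & p`_0 = c].
    by split; rewrite !coefE /= ?mulr1 ?mulr0 ?addr0 ?add0r.
  by rewrite p0 !coef0 !eqxx.
have size_p : (size p <= ((a != 0)%R).+2)%N.
  apply/leq_sizeP => j; rewrite !coefE; case: eqP => [-> | _];
    by case: j => [|[|[|j]]] //= _; rewrite ?mul0r ?mulr0 ?addr0.
set S := [set x | _].
have S_roots : all (root p) (enum S).
  by apply/allP => x; rewrite mem_enum inE /root !hornerE.
have := max_poly_roots p_neq0 S_roots (enum_uniq (mem S)).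
rewrite -cardE => lt_S; exact: leq_trans lt_S size_p.
Qed.

Lemma affine_coefs_eq (F : idomainType) (u v a a' m m' : F) : u != v ->
  a + u * m = a' + u * m' -> a + v * m = a' + v * m' -> a = a' /\ m = m'.
Proof.
move=> uv eu ev.
have diff : (v - u) * (m - m') = 0.
  transitivity ((a + v * m) - (a' + v * m') - ((a + u * m) - (a' + u * m'))); first by ring.
  by rewrite eu ev !subrr.
have mm' : m = m'.
  by apply/eqP; move/eqP: diff; rewrite mulf_eq0 !subr_eq0 eq_sym (negbTE uv).
by split=> //; apply: (addIr (u * m)); rewrite eu mm'.
Qed.

Lemma pchar_odd_two_neq0 (R : nzRingType) p : p \in [pchar R] -> odd p -> 2 != 0 :> R.
Proof.
move=> pR p_odd; rewrite -(dvdn_pcharf pR); apply: contraL p_odd => /(@dvdn_leq p 2 isT).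
by move: (pcharf_prime pR); case: p {pR} => [|[|[|]]].
Qed.

Lemma exists_ratio_free_set (F : finFieldType) (R : {set F}) m :
  {in R, forall rho, rho^-1 \in R} -> (m + m * #|R| < #|F|.-1)%N ->
  exists L : {set F}, [/\ #|L| = m.+1, 0 \notin L &
    {in L &, forall x y, x != y -> x / y \notin R}].
Proof.
move=> R_inv; elim: m => [|m IHm] lt_m.
  have /card_gt0P [x] : (0 < #|[set~ (0%R : F)]|)%N by rewrite cardsC1.
  rewrite !inE => x_neq0; exists [set x]; split; rewrite ?cards1 ?inE 1?eq_sym //.
  by move=> y z; rewrite !inE => /eqP -> /eqP ->; rewrite eqxx.
have [|L [card_L L0 L_free]] := IHm; first by lia.
set U := \bigcup_(mu in L) [set rho * mu | rho in R].
have card_U : (#|U| <= m.+1 * #|R|)%N.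
  apply: leq_trans (leq_card_bigcup _ _) _; rewrite -card_L -sum_nat_const.
  by apply: leq_sum => mu _; apply: leq_imset_card.
have card_Bad : (#|0%R |: (L :|: U)| < #|F|)%N.
  rewrite cardsU1; apply: leq_ltn_trans (leq_add (leq_b1 _) (leq_card_setU L U)) _.
  rewrite card_L; apply: leq_ltn_trans (leq_add (leqnn 1) (leq_add (leqnn _) card_U)) _.
  lia.
have /card_gt0P [z] : (0 < #|~: (0%R |: (L :|: U))|)%N.
  by rewrite cardsCs setCK subn_gt0.
rewrite !inE negb_or => /andP [z_neq0 /norP [zL zU]].
exists (z |: L); split; first by rewrite cardsU1 zL card_L.
  by rewrite !inE negb_or eq_sym z_neq0.
have zU_ratio y : y \in L -> z / y \notin R.
  move=> yL; apply: contra zU => zyR; apply/bigcupP; exists y => //.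
  by apply/imsetP; exists (z / y); rewrite // divfK //; apply: contraNneq L0 => <-.
move=> x y; rewrite !inE => /predU1P [-> | xL] /predU1P [-> | yL] //; first by rewrite eqxx.
- by move=> _; apply: zU_ratio.
- by move=> _; apply: contra (zU_ratio _ xL) => /R_inv; rewrite invf_div.
- exact: L_free.
Qed.

Section SlopeRatios.
Variables (F : finFieldType) (r : nat) (c : 'I_r -> F).

Definition slope_ratios : {set F} :=
  [set (c t.2 - c t.1.2) / (c t.2 - c t.1.1) | t : 'I_r * 'I_r * 'I_r].

Definition slope_separated (L : {set F}) :=
  forall i j k x y, k != i -> k != j -> x \in L -> y \in L ->
    (c k - c i) * x = (c k - c j) * y -> i = j /\ x = y.

Lemma slope_ratios_inv : {in slope_ratios, forall rho, rho^-1 \in slope_ratios}.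
Proof.
move=> _ /imsetP [[[i j] k] _ ->]; rewrite invf_div.
by apply/imsetP; exists (j, i, k).
Qed.

Lemma card_slope_ratios : (#|slope_ratios| <= r ^ 3)%N.
Proof.
by apply: leq_trans (leq_imset_card _ _) _; rewrite !card_prod card_ord -!mulnA.
Qed.

Lemma ratio_free_slope_separated (L : {set F}) : injective c -> 0 \notin L ->
  {in L &, forall x y, x != y -> x / y \notin slope_ratios} -> slope_separated L.
Proof.
move=> c_inj L0 L_free i j k x y ki kj xL yL eq_xy.
have nz_diff l : k != l -> c k - c l != 0 by rewrite subr_eq0 (inj_eq c_inj).
have [exy | xy] := eqVneq x y; last first.
  case/negP: (L_free _ _ xL yL xy); apply/imsetP; exists (i, j, k) => //=.
  have y_neq0 : y != 0 by apply: contraNneq L0 => <-.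
  apply: (mulfI (nz_diff _ ki)).
  by rewrite mulrA eq_xy mulfK // [RHS]mulrC divfK ?nz_diff.
have x_neq0 : x != 0 by apply: contraNneq L0 => <-.
subst y; move/(mulIf x_neq0)/addrI/oppr_inj: eq_xy => ci_cj.
by split=> //; apply: c_inj.
Qed.
End SlopeRatios.

Section CurveHypergraph.
Variables (F : finFieldType) (r : nat) (c : 'I_r -> F) (Lam : {set F}).
Hypothesis c_inj : injective c.
Hypothesis Lam_neq0 : 0 \notin Lam.
Hypothesis Lam_sep : slope_separated c Lam.
Hypothesis two_neq0 : 2 != 0 :> F.

Definition curve_point (i : 'I_r) (th : F * F * F * F) : F * F :=
  let: (a, b, lam, s) := th in (a + c i * (lam * s), b + c i * (lam * s ^+ 2)).

Definition curve_edge th : {set 'I_r * (F * F)} := [set (i, curve_point i th) | i : 'I_r].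

Definition curve_params : {set F * F * F * F} := setX (setX setT Lam) [set~ 0].

Definition curve_hypergraph := curve_edge @: curve_params.

Lemma mem_curve_edge k z th : ((k, z) \in curve_edge th) = (z == curve_point k th).
Proof. by apply/imsetP/eqP => [[i _ [-> ->]] // | ->]; exists k. Qed.

Lemma card_curve_edge e : e \in curve_hypergraph -> #|e| = r.
Proof. by case/imsetP => th _ ->; rewrite card_imset ?card_ord // => i j []. Qed.

Lemma curve_params_inj i j th th' : i != j -> th \in curve_params ->
  curve_point i th = curve_point i th' -> curve_point j th = curve_point j th' -> th = th'.
Proof.
case: th th' => [[[a b] lam] s] [[[a' b'] lam'] s'] ij.
rewrite !in_setX !inE /= => /andP [lamL s_neq0] [ei1 ei2] [ej1 ej2].
have cij : c i != c j by rewrite (inj_eq c_inj).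
have [<- ls] := affine_coefs_eq cij ei1 ej1.
have [<- ls2] := affine_coefs_eq cij ei2 ej2.
have lam_neq0 : lam != 0 by apply: contraNneq Lam_neq0 => <-.
have ss : s = s'.
  apply: (mulfI (mulf_neq0 lam_neq0 s_neq0)).
  by rewrite -mulrA -expr2 ls2 expr2 mulrA -ls.
by subst s'; rewrite (mulIf s_neq0 ls).
Qed.

Lemma curve_hypergraph_linear : linear_hypergraph curve_hypergraph.
Proof.
move=> _ _ [i z] [j z'] /imsetP [th th_ok ->] /imsetP [th' _ ->] zz'.
rewrite !mem_curve_edge => /eqP zi /eqP z'j /eqP zi' /eqP z'j'.
have ij : i != j by apply: contraNneq zz' => eij; rewrite -eij in z'j *; rewrite zi z'j.
by rewrite (curve_params_inj ij th_ok (etrans (esym zi) zi') (etrans (esym z'j) z'j')).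
Qed.

Lemma card_curve_hypergraph : (1 < r)%N ->
  #|curve_hypergraph| = (#|F| ^ 2 * #|Lam| * #|F|.-1)%N.
Proof.
move=> r_gt1; rewrite card_in_imset => [|th th' th_ok _ eth].
  by rewrite !cardsX cardsT card_prod cardsC1.
have same k : curve_point k th = curve_point k th'.
  by apply/eqP; rewrite -mem_curve_edge -eth mem_curve_edge.
by apply: (@curve_params_inj (Ordinal (ltnW r_gt1)) (Ordinal r_gt1)).
Qed.

(* A common neighbour of p in copy i and p' in copy j lying in copy k is
   p + A (s', s'^2) = p' + B (s, s^2); eliminating s' leaves this quadratic in s. *)
Definition nbhd_roots i j (p p' : F * F) k x y : {set F} :=
  let A := (c k - c i) * x in let B := (c k - c j) * y in
  let d1 := p'.1 - p.1 in let d2 := p'.2 - p.2 in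
  [set s | B * (B - A) * s ^+ 2 + 2 * d1 * B * s + (d1 ^+ 2 - A * d2) == 0].

Definition nbhd_candidates i j (p p' : F * F) k x y : {set 'I_r * (F * F)} :=
  let B := (c k - c j) * y in
  [set (k, (p'.1 + B * s, p'.2 + B * s ^+ 2)) | s in nbhd_roots i j p p' k x y].

Lemma common_nbhd_curve_sub i j p p' :
  common_nbhd curve_hypergraph (i, p) (j, p') \subset
  \bigcup_(k in ~: [set i; j]) \bigcup_(x in Lam) \bigcup_(y in Lam)
    nbhd_candidates i j p p' k x y.
Proof.
apply/subsetP => -[k z]; rewrite inE.
case/and4P => wu wv /existsP [_ /andP [/imsetP [[[[a1 b1] x] s1] th1_ok ->]]].
rewrite !mem_curve_edge => /andP [/eqP pE /eqP zE1].
case/existsP => _ /andP [/imsetP [[[[a2 b2] y] s2] th2_ok ->]].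
rewrite !mem_curve_edge => /andP [/eqP p'E /eqP zE2].
have k_out : k \in ~: [set i; j].
  rewrite !inE negb_or; apply/andP; split.
    by apply: contra wu => /eqP eki; rewrite eki in zE1 *; rewrite pE zE1.
  by apply: contra wv => /eqP ekj; rewrite ekj in zE2 *; rewrite p'E zE2.
move: th1_ok th2_ok; rewrite !in_setX !inE /= => /andP [xL _] /andP [yL _].
rewrite zE2; move: zE2; rewrite zE1 => -[ea2 eb2]; subst p p'.
have -> : a2 = a1 + c k * (x * s1) - c k * (y * s2) by rewrite ea2; ring.
have -> : b2 = b1 + c k * (x * s1 ^+ 2) - c k * (y * s2 ^+ 2) by rewrite eb2; ring.
apply/bigcupP; exists k => //.
apply/bigcupP; exists x => //; apply/bigcupP; exists y => //.
apply/imsetP; exists s2; rewrite ?inE /=; first by apply/eqP; ring.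
by congr (_, (_, _)); ring.
Qed.

Lemma card_nbhd_roots i j p p' k x y :
  (i, p) != (j, p') -> k \in ~: [set i; j] -> x \in Lam -> y \in Lam ->
  (#|nbhd_roots i j p p' k x y| <= ((i != j) || (x != y)).+1)%N.
Proof.
move=> uv; rewrite !inE negb_or => /andP [ki kj] xL yL.
set A := (c k - c i) * x; set B := (c k - c j) * y.
have nz_diff l : k != l -> c k - c l != 0 by rewrite subr_eq0 (inj_eq c_inj).
have nz_Lam w : w \in Lam -> w != 0 by apply: contraTneq => ->.
have B_neq0 : B != 0 by rewrite mulf_neq0 ?nz_diff ?nz_Lam.
have lead_neq0 : (B * (B - A) != 0) = (i != j) || (x != y).
  rewrite mulf_eq0 (negbTE B_neq0) subr_eq0 eq_sym -negb_and; congr (~~ _).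
  apply/eqP/andP => [/(Lam_sep ki kj xL yL) [-> ->] | [/eqP eij /eqP exy]] //.
  by rewrite /A /B eij exy.
rewrite -lead_neq0; apply: card_roots_quadratic.
rewrite -/A -/B lead_neq0.
have [eij | //] := eqVneq i j.
have [exy | //] := eqVneq x y.
subst j y; move: uv; rewrite /A -/B; case: p p' => [p1 p2] [p1' p2'] /=.
move=> uv; have [e1 | d1] := eqVneq p1' p1.
  rewrite e1 subrr expr0n /= sub0r oppr_eq0 !mulr0 mul0r eqxx /= mulf_neq0 // subr_eq0.
  by apply: contraNneq uv => ->; rewrite e1 eqxx.
by rewrite mulf_neq0 // mulf_neq0 // subr_eq0.
Qed.

Lemma codegree_curve_hypergraph : (r <= 2 * #|Lam| + 1)%N ->
  codegree_le curve_hypergraph ((r - 1) * (2 * #|Lam| ^ 2 - #|Lam|))%N.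
Proof.
move=> r_le [i p] [j p'] uv.
apply: leq_trans (subset_leq_card (common_nbhd_curve_sub i j p p')) _.
apply: leq_trans (leq_card_bigcup _ _) _.
apply: (@leq_trans (\sum_(k in ~: [set i; j]) \sum_(x in Lam) \sum_(y in Lam)
                     ((i != j) || (x != y)).+1)).
  apply: leq_sum => k k_out; apply: leq_trans (leq_card_bigcup _ _) _.
  apply: leq_sum => x xL; apply: leq_trans (leq_card_bigcup _ _) _.
  apply: leq_sum => y yL; apply: leq_trans (leq_imset_card _ _) _.
  exact: card_nbhd_roots.
have card_out : #|~: [set i; j]| = (r - (i != j).+1)%N.
  by have := cardsC [set i; j]; rewrite cards2 card_ord; lia.
rewrite sum_nat_const card_out; have [_ | _] := eqVneq i j.
  by rewrite /= double_sum_neqS.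
rewrite /= !sum_nat_const; move: r_le; set l := #|Lam|; nia.
Qed.
End CurveHypergraph.

Local Close Scope ring_scope.

Lemma natpowE m n : Nat.pow m n = (m ^ n)%N.
Proof. by elim: n => // n IHn; rewrite expnS -IHn. Qed.

(* Imported only now: [Reals] rebinds [^] on [nat] to [Nat.pow] and the key
   [%R] to the real numbers, as in the statement of [theorem1p4]. *)
From Stdlib Require Import Reals Lra.

Lemma curve_lower_bound r l q : (3 <= r)%N -> (r <= 2 * l + 1)%N ->
  odd_prime_power q -> (2 * l * r ^ 3 <= q)%N ->
  (q ^ 2 * l * (q - 1) <= ex_r r (r * q ^ 2) [:: C2; K2 ((r - 1) * (2 * l ^ 2 - l)).+1])%N.
Proof.
rewrite !natpowE => r_ge3 r_le [p [k [p_prime [p_odd [k_gt0 ->]]]]] q_ge.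
have [F pF card_F] := pPrimePowerField p_prime k_gt0.
rewrite natpowE -[expn p k]card_F in q_ge *.
have l_gt0 : (0 < l)%N by lia.
have r_le_F : (r <= #|F|)%N by apply: leq_trans q_ge; nia.
pose c (i : 'I_r) : F := enum_val (widen_ord r_le_F i).
have c_inj : injective c by move=> i j /enum_val_inj [] /val_inj.
have [|Lam [card_Lam Lam0 Lam_free]] := exists_ratio_free_set (@slope_ratios_inv _ _ c) (m := l.-1).
  by have := card_slope_ratios c; nia.
rewrite prednK // in card_Lam.
have Lam_sep := ratio_free_slope_separated c_inj Lam0 Lam_free.
have two_neq0 := pchar_odd_two_neq0 pF p_odd.
have := card_le_ex_r (@card_curve_edge _ _ c Lam) (curve_hypergraph_linear c_inj Lam0)
  (codegree_curve_hypergraph c_inj Lam0 Lam_sep two_neq0 _).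
rewrite (card_curve_hypergraph c_inj Lam0) ?card_prod ?card_ord ?card_Lam ?mulnn ?subn1; last by lia.
by apply.
Qed.

Lemma Rpower_sqr_three_halves (x : R) : (0 < x)%R -> Rpower (x ^ 2) (3 / 2) = (x ^ 3)%R.
Proof.
move=> x_gt0; rewrite -(Rpower_pow 2 _ x_gt0) Rpower_mult -(Rpower_pow 3 _ x_gt0).
by congr Rpower; rewrite /=; lra.
Qed.

Lemma power_bound_eq (l r q : R) : (0 < r)%R -> (0 < q)%R ->
  (l / Rpower r (3 / 2) * Rpower (r * q ^ 2) (3 / 2) - l / r * (r * q ^ 2)
   = q ^ 2 * l * (q - 1))%R.
Proof.
move=> r_gt0 q_gt0; have r32_gt0 : (0 < Rpower r (3 / 2))%R by apply: exp_pos.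
rewrite -Rpower_mult_distr ?Rpower_sqr_three_halves //; last exact: pow_lt.
by field; lra.
Qed.

Theorem theorem1p4 (r l q n : nat) :
  (3 <= r)%N -> (r <= 2 * l + 1)%N ->
  odd_prime_power q -> (2 * l * r ^ 3 <= q)%N ->
  n = (r * q ^ 2)%N ->
  let t := ((r - 1) * (2 * l ^ 2 - l))%N in
  (INR l / Rpower (INR r) (3 / 2) * Rpower (INR n) (3 / 2)
     - INR l / INR r * INR n <= INR (ex_r r n [:: C2; K2 t.+1]))%R.
Proof.
move=> r_ge3 r_le q_opp q_ge -> t.
have q_gt0 : (0 < q)%N by apply: leq_trans q_ge; rewrite natpowE; nia.
apply: Rle_trans (le_INR _ _ (leP (curve_lower_bound r_ge3 r_le q_opp q_ge))).
have [r_gt0 qR_gt0] : (0 < INR r)%R /\ (0 < INR q)%R by split; apply/lt_0_INR/ltP; lia.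
rewrite mult_INR pow_INR power_bound_eq //; apply: Req_le.
by rewrite mult_INR mult_INR pow_INR minus_INR //; apply/leP.
Qed.
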